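(* Let $v,\alpha,h\in\mathbb{R}^d$ with $|\alpha|\ge|h|$ and $\alpha\cdot h=0$. Then $$\mu(v-h)\mu(v+\alpha)=\mu(v)\mu(v+\alpha-h)\le\mu^{1/9}(v)\mu^{1/9}(v+\alpha),$$ $$\mu(v-h)\mu(v+\alpha-h)\le\mu^{1/20}(v)\mu^{1/20}(v+\alpha).$$
   Context: $\mu(v)=(2\pi)^{-d/2}e^{-|v|^2/2}$ is the standard Gaussian on $\mathbb{R}^d$. *)

From HB Require Import structures.
From mathcomp Require Import all_boot all_order all_algebra.
From mathcomp Require Import all_classical all_reals all_analysis.
Set Implicit Arguments. Unset Strict Implicit. Unset Printing Implicit Defensive.
Import Order.TTheory GRing.Theory Num.Theory.
Local Open Scope ring_scope.

Definition dotv (R : realType) (d : nat) (u w : 'rV[R]_d) : R :=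
  \sum_(i < d) u 0 i * w 0 i.

Definition enorm (R : realType) (d : nat) (v : 'rV[R]_d) : R :=
  Num.sqrt (dotv v v).

Definition mu (R : realType) (d : nat) (v : 'rV[R]_d) : R :=
  powR (2 * pi) (- (d%:R / 2)) * expR (- (enorm v ^+ 2) / 2).

From mathcomp Require Import all_boot all_order all_algebra.
From mathcomp Require Import all_classical all_reals all_analysis.
From mathcomp Require Import lra.
Import Order.TTheory GRing.Theory Num.Theory.
Local Open Scope ring_scope.

(* With mu(u) = exp(c - |u|^2/2) and c = -(d/2) ln(2 pi) <= 0, every claim
   reduces to a comparison of sums of squared norms: since c <= r c for
   0 <= r <= 1, the bound mu(u) mu(w) <= (mu(u') mu(w'))^r only needs
   r (|u'|^2 + |w'|^2) <= |u|^2 + |w|^2.  Orthogonality of alpha and h gives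
   the Pythagorean identity |v - h|^2 + |v + alpha|^2 = |v|^2 + |v + alpha - h|^2,
   and each quadratic inequality is certified by the nonnegativity of one
   explicit squared norm (together with |alpha| >= |h| for the exponent 1/20). *)

Section InnerProduct.
Context {R : realType} {d : nat}.
Implicit Types u w z : 'rV[R]_d.

Lemma dotvC u w : dotv u w = dotv w u.
Proof. by apply: eq_bigr => i _; rewrite mulrC. Qed.

Lemma dotvDl u w z : dotv (u + w) z = dotv u z + dotv w z.
Proof. by rewrite /dotv -big_split; apply: eq_bigr => i _; rewrite !mxE mulrDl. Qed.

Lemma dotvNl u z : dotv (- u) z = - dotv u z.
Proof. by rewrite /dotv -sumrN; apply: eq_bigr => i _; rewrite !mxE mulNr. Qed.

Lemma dotvZl a u z : dotv (a *: u) z = a * dotv u z.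
Proof. by rewrite /dotv mulr_sumr; apply: eq_bigr => i _; rewrite !mxE mulrA. Qed.

Lemma dotvDr u w z : dotv z (u + w) = dotv z u + dotv z w.
Proof. by rewrite dotvC dotvDl !(dotvC z). Qed.

Lemma dotvNr u z : dotv z (- u) = - dotv z u.
Proof. by rewrite dotvC dotvNl dotvC. Qed.

Lemma dotvZr a u z : dotv z (a *: u) = a * dotv z u.
Proof. by rewrite dotvC dotvZl dotvC. Qed.

Definition dotvE := (dotvDl, dotvDr, dotvNl, dotvNr, dotvZl, dotvZr).

Lemma dotvv_ge0 u : 0 <= dotv u u.
Proof. by apply: sumr_ge0 => i _; rewrite -expr2 sqr_ge0. Qed.

Lemma enorm_sqr u : enorm u ^+ 2 = dotv u u.
Proof. by rewrite sqr_sqrtr ?dotvv_ge0. Qed.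

Lemma ler_enorm u w : (enorm u <= enorm w) = (dotv u u <= dotv w w).
Proof. by rewrite ler_sqrt ?dotvv_ge0. Qed.

End InnerProduct.

Section GaussianDensity.
Context {R : realType} {d : nat}.
Implicit Types u w : 'rV[R]_d.

Definition mu_logc : R := - (d%:R / 2 * ln (2 * pi)).

Lemma mu_logc_le0 : mu_logc <= 0.
Proof.
rewrite oppr_le0 mulr_ge0 ?divr_ge0 ?ln_ge0 //.
by have := @pi_ge2 R; lra.
Qed.

Lemma muE u : mu u = expR (mu_logc - dotv u u / 2).
Proof.
have pi2_pos : 0 < 2 * pi :> R by rewrite mulr_gt0 ?pi_gt0.
rewrite /mu -(lnK pi2_pos) -expRM -expRD enorm_sqr /mu_logc.
by rewrite mulrN mulrC mulNr.
Qed.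

Lemma mu_mul_eq u w u' w' :
  dotv u u + dotv w w = dotv u' u' + dotv w' w' -> mu u * mu w = mu u' * mu w'.
Proof. by move=> Q; rewrite !muE -!expRD; congr expR; lra. Qed.

Lemma mu_mul_le_powR u w u' w' (r : R) : 0 <= r -> r <= 1 ->
  r * (dotv u' u' + dotv w' w') <= dotv u u + dotv w w ->
  mu u * mu w <= powR (mu u') r * powR (mu w') r.
Proof.
move=> r_ge0 r_le1 Q; rewrite !muE -!expRM -!expRD ler_expR.
have c_le0 := mu_logc_le0; have c_le_rc : mu_logc <= r * mu_logc by nra.
lra.
Qed.

End GaussianDensity.

Section OrthogonalShift.
Context {R : realType} {d : nat}.
Variable v : 'rV[R]_d.
Context {alpha h : 'rV[R]_d}.
Hypothesis alpha_perp_h : dotv alpha h = 0.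

Let dotv_orient := (dotvC h alpha, dotvC alpha v, dotvC h v).

Lemma sqnorm_shift_eq :
  dotv (v - h) (v - h) + dotv (v + alpha) (v + alpha)
  = dotv v v + dotv (v + alpha - h) (v + alpha - h).
Proof. by rewrite !dotvE !dotv_orient alpha_perp_h; lra. Qed.

(* 16 (rhs - lhs) = |16 v + 8 alpha - 9 h|^2 + 64 |alpha|^2 + 63 |h|^2 *)
Lemma sqnorm_shift_ge_ninth :
  1 / 9 * (dotv v v + dotv (v + alpha) (v + alpha))
  <= dotv v v + dotv (v + alpha - h) (v + alpha - h).
Proof.
have := dotvv_ge0 (16 *: v + 8 *: alpha - 9 *: h).
have := dotvv_ge0 alpha; have := dotvv_ge0 h.
by rewrite !dotvE !dotv_orient alpha_perp_h; lra.
Qed.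

(* 38 (rhs - lhs) = |38 v + 19 alpha - 40 h|^2 + 361 |alpha|^2 - 80 |h|^2 *)
Lemma sqnorm_shift_ge_twentieth :
  dotv h h <= dotv alpha alpha ->
  1 / 20 * (dotv v v + dotv (v + alpha) (v + alpha))
  <= dotv (v - h) (v - h) + dotv (v + alpha - h) (v + alpha - h).
Proof.
move=> h_le_alpha; have := dotvv_ge0 (38 *: v + 19 *: alpha - 40 *: h).
have := dotvv_ge0 h.
by rewrite !dotvE !dotv_orient alpha_perp_h; lra.
Qed.

End OrthogonalShift.

Theorem lemma3p3 (R : realType) (d : nat) (v alpha h : 'rV[R]_d) :
  enorm h <= enorm alpha -> dotv alpha h = 0 ->
  [/\ mu (v - h) * mu (v + alpha) = mu v * mu (v + alpha - h),
      mu v * mu (v + alpha - h) <= powR (mu v) (1/9) * powR (mu (v + alpha)) (1/9)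
    & mu (v - h) * mu (v + alpha - h) <= powR (mu v) (1/20) * powR (mu (v + alpha)) (1/20)].
Proof.
rewrite ler_enorm => h_le_alpha alpha_perp_h; split.
- exact/mu_mul_eq/(sqnorm_shift_eq v alpha_perp_h).
- by apply: mu_mul_le_powR; [lra | lra | exact: (sqnorm_shift_ge_ninth v alpha_perp_h)].
- by apply: mu_mul_le_powR; [lra | lra | exact: (sqnorm_shift_ge_twentieth v alpha_perp_h)].
Qed.
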